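(* Let $\mathbb{K}$ be an algebraically closed field with $\operatorname{char}(\mathbb{K})\neq 2$, and let $q\in\mathbb{K}^{\times}\setminus\{-1\}$, where $\mathbb{K}^{\times}=\mathbb{K}\setminus\{0\}$. Let \[ A=\frac{\mathbb{K}\langle x_1,x_2,x_3,x_4\rangle}{\langle g_1,\ldots,g_6\rangle}, \] where \[ g_1=x_1x_2-x_2x_1,\quad g_2=x_2x_3-x_3x_2,\quad g_3=x_1x_3-x_3x_1,\quad g_4=x_1x_4-x_4x_1, \] \[ g_5=x_2x_4-x_4x_2-q(x_1^2-x_2x_4),\quad g_6=x_4x_3-x_3x_4. \] Then the point scheme of $A$ is $Q\cup L\subset\mathbb{P}^3$, where $Q=\mathcal{V}(x_1^2-x_2x_4)$ and $L=\mathcal{V}(x_1,x_3)$.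
   Context: Point scheme: for a quadratic algebra $A=\mathbb{K}\langle x_1,\dots,x_4\rangle/\langle g_1,\dots,g_6\rangle$ with each $g_i=\sum_{j,k}c_{ijk}x_jx_k$ homogeneous of degree 2, let $D$ be the $6\times 4$ matrix with entries $D_{ik}=\sum_j c_{ijk}x_j$ (linear forms in $x_1,\dots,x_4$), so that $g_i(\alpha,\beta):=\sum_{j,k}c_{ijk}\alpha_j\beta_k=(D(\alpha)\beta)_i$ for $(\alpha,\beta)\in\mathbb{P}^3\times\mathbb{P}^3$. The point scheme of $A$ is the subscheme of $\mathbb{P}^3$ (homogeneous coordinates $x_1,\dots,x_4$) defined by the vanishing of all $4\times 4$ minors of $D$; its points are the $\alpha\in\mathbb{P}^3$ for which there exists $\beta\in\mathbb{P}^3$ with $g_i(\alpha,\beta)=0$ for all $i$. For homogeneous polynomials $f_1,\dots,f_r$, $\mathcal{V}(f_1,\dots,f_r)$ denotes their zero locus (subscheme) in $\mathbb{P}^3$. *)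

From HB Require Import structures.
From mathcomp Require Import all_boot all_order all_algebra.
From mathcomp Require Import mpoly.
Set Implicit Arguments.
Unset Strict Implicit.
Unset Printing Implicit Defensive.
Import Order.TTheory GRing.Theory.
Local Open Scope ring_scope.

(* Polynomial ring K[x_1,..,x_4] = {mpoly K[4]}; variable x_(j+1) is 'X_j
   (indices are 0-based: x1 = 'X_0, x2 = 'X_1, x3 = 'X_2, x4 = 'X_3). *)

(* Coefficient tensor c_{ijk} of the quadratic relations g_i = sum c_{ijk} x_j x_k
   of the algebra A of the statement (0-based indices, g_(i+1) <-> i):
   g1 = x1x2 - x2x1, g2 = x2x3 - x3x2, g3 = x1x3 - x3x1, g4 = x1x4 - x4x1,
   g5 = x2x4 - x4x2 - q(x1^2 - x2x4) = (1+q) x2x4 - x4x2 - q x1x1,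
   g6 = x4x3 - x3x4. *)
Local Open Scope nat_scope.
Definition coefA (K : fieldType) (q : K) (i : 'I_6) (j k : 'I_4) : K :=
  match val i, val j, val k with
  | 0, 0, 1 => 1%R | 0, 1, 0 => (-1)%R
  | 1, 1, 2 => 1%R | 1, 2, 1 => (-1)%R
  | 2, 0, 2 => 1%R | 2, 2, 0 => (-1)%R
  | 3, 0, 3 => 1%R | 3, 3, 0 => (-1)%R
  | 4, 1, 3 => (1 + q)%R | 4, 3, 1 => (-1)%R | 4, 0, 0 => (- q)%R
  | 5, 3, 2 => 1%R | 5, 2, 3 => (-1)%R
  | _, _, _ => 0%R
  end.
Local Open Scope ring_scope.

Definition gform (K : fieldType) (m : nat) (c : 'I_m -> 'I_4 -> 'I_4 -> K)
  (i : 'I_m) (alpha beta : 'rV[K]_4) : K :=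
  \sum_(j < 4) \sum_(k < 4) c i j k * alpha 0 j * beta 0 k.

Definition Dmat (K : fieldType) (m : nat) (c : 'I_m -> 'I_4 -> 'I_4 -> K)
  : 'M[{mpoly K[4]}]_(m, 4) :=
  \matrix_(i < m, k < 4) \sum_(j < 4) c i j k *: 'X_j.

(* The family of all 4 x 4 minors of D, indexed by the choice of 4 rows
   (non-injective choices give the zero minor, which is harmless). *)
Definition minors4 (K : fieldType) (m : nat) (c : 'I_m -> 'I_4 -> 'I_4 -> K)
  (f : {ffun 'I_4 -> 'I_m}) : {mpoly K[4]} :=
  \det (rowsub f (Dmat c)).

Definition in_ideal (K : fieldType) (I : finType) (G : I -> {mpoly K[4]})
  (p : {mpoly K[4]}) : Prop :=
  exists a : {ffun I -> {mpoly K[4]}}, p = \sum_(i : I) a i * G i.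

(* p lies in the saturation (J : m^oo) of the ideal J generated by G with
   respect to the irrelevant ideal m = (x1,..,x4): some power m^n, which is
   generated by the monomials of total degree n, multiplies p into J. *)
Definition in_saturation (K : fieldType) (I : finType) (G : I -> {mpoly K[4]})
  (p : {mpoly K[4]}) : Prop :=
  exists n : nat, forall mon : 'X_{1..4}, mdeg mon = n -> in_ideal G ('X_[mon] * p).

(* Two homogeneous ideals (given by generators) define the same closed
   subscheme of P^3 iff their saturations coincide. *)
Definition same_subscheme (K : fieldType) (I1 I2 : finType)
  (G1 : I1 -> {mpoly K[4]}) (G2 : I2 -> {mpoly K[4]}) : Prop :=
  forall p, in_saturation G1 p <-> in_saturation G2 p.

(* Generators of the ideal of Q \cup L = V(x1^2 - x2x4) \cup V(x1, x3):
   the intersection (x1^2 - x2x4) \cap (x1, x3) = ((x1^2-x2x4) x1, (x1^2-x2x4) x3). *)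
Definition QuL_gens (K : fieldType) (b : bool) : {mpoly K[4]} :=
  ('X_0 ^+ 2 - 'X_1 * 'X_3) * (if b then 'X_0 else 'X_2).

From HB Require Import structures.
From mathcomp Require Import all_boot all_order all_algebra all_fingroup.
From mathcomp Require Import mpoly ring.
Import Order.TTheory GRing.Theory.
Local Open Scope ring_scope.

(* Write F = x1^2 - x2 x4, so that Q u L is cut out by J = (F x1, F x3).  Up to
   sign a 4x4 minor of D only depends on the set of chosen rows, and of the
   fifteen such minors seven vanish while the others are +-q x_j F x1 or
   +-q x_j F x3; conversely every x_j F x1 and x_j F x3 is +-1/q times a minor.
   Hence m J <= (minors) <= J for the irrelevant ideal m, and both ideals have
   the same saturation (this is where q <> 0 is used).
   On points: if D(alpha) beta = 0 with beta <> 0, every minor vanishes at alpha,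
   hence so do alpha_j F(alpha) alpha_1 and alpha_j F(alpha) alpha_3; taking
   alpha_j <> 0 puts alpha on Q or on L.  Conversely all relations but g5 are
   commutators and g5(x, x) = -q F(x), so beta = alpha works on Q, while on L
   one takes beta = (0, (1+q) alpha_2, 0, alpha_4). *)

Section IdealMembership.
Context {K : fieldType} {I : finType} {G : I -> {mpoly K[4]}}.

Lemma in_ideal0 : in_ideal G 0.
Proof. by exists [ffun=> 0]; rewrite big1 // => i _; rewrite ffunE mul0r. Qed.

Lemma in_idealD p1 p2 : in_ideal G p1 -> in_ideal G p2 -> in_ideal G (p1 + p2).
Proof.
case=> a -> [b ->]; exists [ffun i => a i + b i]; rewrite -big_split /=.
by apply: eq_bigr => i _; rewrite ffunE mulrDl.
Qed.

Lemma in_idealMl r p : in_ideal G p -> in_ideal G (r * p).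
Proof.
case=> a ->; exists [ffun i => r * a i]; rewrite mulr_sumr.
by apply: eq_bigr => i _; rewrite ffunE mulrA.
Qed.

Lemma in_ideal_sum (J : finType) (F : J -> {mpoly K[4]}) :
  (forall j, in_ideal G (F j)) -> in_ideal G (\sum_j F j).
Proof. by move=> GF; apply: big_ind => //; [exact: in_ideal0 | exact: in_idealD]. Qed.

Lemma in_ideal_gen i : in_ideal G (G i).
Proof.
exists [ffun k => (k == i)%:R]; rewrite (bigD1 i) //= big1 => [|k /negbTE ki].
  by rewrite ffunE eqxx mul1r addr0.
by rewrite ffunE ki mul0r.
Qed.

Lemma in_ideal_genZ i c p : c != 0 -> G i = c%:MP * p -> in_ideal G p.
Proof.
move=> nz_c Gi; have -> : p = c^-1%:MP * G i by rewrite Gi mulrA -mpolyCM mulVf ?mul1r.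
exact/in_idealMl/in_ideal_gen.
Qed.

Lemma meval_in_ideal {p} (v : 'I_4 -> K) :
  in_ideal G p -> (forall i, (G i).@[v] = 0) -> p.@[v] = 0.
Proof.
move=> [a ->] Gv; rewrite raddf_sum big1 // => i _.
by apply: etrans (mevalM _ _ _) _; rewrite Gv mulr0.
Qed.

End IdealMembership.

Section IdealComparison.
Context {K : fieldType} {I J : finType}.
Context {G1 : I -> {mpoly K[4]}} {G2 : J -> {mpoly K[4]}}.

Lemma in_ideal_subset p :
  (forall i, in_ideal G2 (G1 i)) -> in_ideal G1 p -> in_ideal G2 p.
Proof. by move=> G12 [a ->]; apply: in_ideal_sum => i; apply: in_idealMl. Qed.

Lemma in_saturation_subset p :
  (forall i, in_ideal G2 (G1 i)) -> in_saturation G1 p -> in_saturation G2 p.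
Proof.
by move=> G12 [n satp]; exists n => mon deg_mon; apply: in_ideal_subset (satp _ _).
Qed.

Lemma in_saturation_mulX p :
  (forall j i, in_ideal G2 ('X_j * G1 i)) -> in_saturation G1 p -> in_saturation G2 p.
Proof.
move=> XG12 [n satp]; exists n.+1 => mon deg_mon.
have [j Uj_mon] : exists j, (U_(j) <= mon)%MM.
  apply/existsP; apply: contraPT deg_mon; rewrite negb_exists => /forallP mon0.
  rewrite mdegE big1 // => j _; apply/eqP; move: (mon0 j).
  by rewrite lep1mP negbK.
have deg_mon' : mdeg (mon - U_(j))%MM = n.
  by have := mdegD (mon - U_(j)) U_(j); rewrite submK // deg_mon mdeg1 addn1 => -[].
rewrite -(submK Uj_mon) mpolyXD [_ * 'X_j]mulrC -mulrA.
have [a ->] := satp _ deg_mon'.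
by rewrite mulr_sumr; apply: in_ideal_sum => i; rewrite mulrCA; apply: in_idealMl.
Qed.

End IdealComparison.

Lemma same_subscheme_sandwich (K : fieldType) (I J : finType)
    (G1 : I -> {mpoly K[4]}) (G2 : J -> {mpoly K[4]}) :
  (forall i, in_ideal G2 (G1 i)) -> (forall j i, in_ideal G1 ('X_j * G2 i)) ->
  same_subscheme G1 G2.
Proof.
move=> G12 XG21 p; split; [exact: in_saturation_subset | exact: in_saturation_mulX].
Qed.

Definition det4 {R : comNzRingType} (a : nat -> nat -> R) : R :=
  a 0%N 0%N * a 1%N 1%N * a 2%N 2%N * a 3%N 3%N
  - a 0%N 0%N * a 1%N 1%N * a 2%N 3%N * a 3%N 2%N
  - a 0%N 0%N * a 1%N 2%N * a 2%N 1%N * a 3%N 3%N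
  + a 0%N 0%N * a 1%N 2%N * a 2%N 3%N * a 3%N 1%N
  + a 0%N 0%N * a 1%N 3%N * a 2%N 1%N * a 3%N 2%N
  - a 0%N 0%N * a 1%N 3%N * a 2%N 2%N * a 3%N 1%N
  - a 0%N 1%N * a 1%N 0%N * a 2%N 2%N * a 3%N 3%N
  + a 0%N 1%N * a 1%N 0%N * a 2%N 3%N * a 3%N 2%N
  + a 0%N 1%N * a 1%N 2%N * a 2%N 0%N * a 3%N 3%N
  - a 0%N 1%N * a 1%N 2%N * a 2%N 3%N * a 3%N 0%N
  - a 0%N 1%N * a 1%N 3%N * a 2%N 0%N * a 3%N 2%N
  + a 0%N 1%N * a 1%N 3%N * a 2%N 2%N * a 3%N 0%N
  + a 0%N 2%N * a 1%N 0%N * a 2%N 1%N * a 3%N 3%N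
  - a 0%N 2%N * a 1%N 0%N * a 2%N 3%N * a 3%N 1%N
  - a 0%N 2%N * a 1%N 1%N * a 2%N 0%N * a 3%N 3%N
  + a 0%N 2%N * a 1%N 1%N * a 2%N 3%N * a 3%N 0%N
  + a 0%N 2%N * a 1%N 3%N * a 2%N 0%N * a 3%N 1%N
  - a 0%N 2%N * a 1%N 3%N * a 2%N 1%N * a 3%N 0%N
  - a 0%N 3%N * a 1%N 0%N * a 2%N 1%N * a 3%N 2%N
  + a 0%N 3%N * a 1%N 0%N * a 2%N 2%N * a 3%N 1%N
  + a 0%N 3%N * a 1%N 1%N * a 2%N 0%N * a 3%N 2%N
  - a 0%N 3%N * a 1%N 1%N * a 2%N 2%N * a 3%N 0%N
  - a 0%N 3%N * a 1%N 2%N * a 2%N 0%N * a 3%N 1%N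
  + a 0%N 3%N * a 1%N 2%N * a 2%N 1%N * a 3%N 0%N.

Lemma det_mx44 (R : comNzRingType) (a : nat -> nat -> R) :
  \det (\matrix_(i < 4, j < 4) a i j) = det4 a.
Proof.
do 3![rewrite !(expand_det_row _ 0) !big_ord_recl !big_ord0 /cofactor].
by rewrite !det_mx11 !mxE /bump /= !(addn0, add0n, add1n) /det4; ring.
Qed.

Section RowSubDeterminant.
Context {R : comNzRingType} {m n : nat} (A : 'M[R]_(m, n)).

Lemma det_rowsub_noninj (f : 'I_n -> 'I_m) :
  ~~ injectiveb f -> \det (rowsub f A) = 0.
Proof.
case/injectivePn=> i1 [i2 ne_i12 f_i12].
by apply: (determinant_alternate ne_i12) => k; rewrite !mxE f_i12.
Qed.

Lemma det_rowsub_sort (f : 'I_n -> 'I_m) :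
  exists2 s : 'S_n, {homo f \o s : i j / (i <= j)%N}
                  & \det (rowsub f A) = (-1) ^+ s * \det (rowsub (f \o s) A).
Proof.
pose leI (i j : 'I_m) := (i <= j)%N.
pose t := [tuple f i | i < n].
have /tuple_permP[s sort_t] : perm_eq (sort leI t) t by rewrite perm_sort.
exists s => [i j le_ij | ].
  have nth_sort (k : 'I_n) : nth (f i) (sort leI t) k = f (s k).
    by rewrite sort_t -tnth_nth !tnth_mktuple.
  have leI_trans : transitive leI by move=> ? ? ?; apply: leq_trans.
  have lt_size (k : 'I_n) : nat_of_ord k \in [pred k | (k < size (sort leI t))%N].
    by rewrite inE size_sort size_tuple.
  rewrite /= -!nth_sort; apply: (sorted_leq_nth leI_trans) => //.
  by apply: sort_sorted => ? ?; apply: leq_total.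
have -> : rowsub (f \o s) A = perm_mx s *m rowsub f A.
  by rewrite rowsub_comp -row_permEsub row_permE.
by rewrite det_mulmx det_perm mulrA -expr2 sqrr_sign mul1r.
Qed.

End RowSubDeterminant.

Lemma homo_ltn_inj {n m : nat} (g : 'I_n -> 'I_m) :
  injective g -> {homo g : i j / (i <= j)%N} -> {homo g : i j / (i < j)%N}.
Proof.
move=> inj_g le_g i j lt_ij; rewrite ltn_neqAle le_g ?(ltnW lt_ij) // andbT.
by apply: contraTneq lt_ij => /val_inj/inj_g ->; rewrite ltnn.
Qed.

Lemma sum_ord4 (V : nmodType) (F : 'I_4 -> V) :
  \sum_(j < 4) F j = F 0 + F 1 + F 2 + F 3.
Proof.
rewrite !big_ord_recl big_ord0 addr0 !addrA.
by congr (_ + _ + _ + _); congr F; apply: val_inj.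
Qed.

Lemma ord4P (P : 'I_4 -> Prop) : P 0 -> P 1 -> P 2 -> P 3 -> forall j, P j.
Proof.
move=> P0 P1 P2 P3 j; have : j \in [:: 0; 1; 2; 3] by case: j => [[|[|[|[|//]]]] ?].
by rewrite !inE => /or4P[] /eqP->.
Qed.

Section PointSchemeMatrix.
Context {K : fieldType} (q : K).

Definition D_rows : seq (seq {mpoly K[4]}) :=
  [:: [:: - 'X_1; 'X_0; 0; 0];
      [:: 0; - 'X_2; 'X_1; 0];
      [:: - 'X_2; 0; 'X_0; 0];
      [:: - 'X_3; 0; 0; 'X_0];
      [:: - (q%:MP * 'X_0); - 'X_3; 0; (1 + q)%:MP * 'X_1];
      [:: 0; 0; 'X_3; - 'X_2]].

Definition D_entry (i k : nat) : {mpoly K[4]} := (nth [::] D_rows i)`_k.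

Lemma Dmat_coefA (i : 'I_6) (k : 'I_4) : Dmat (coefA q) i k = D_entry i k.
Proof.
rewrite mxE sum_ord4 -!mul_mpolyC.
case: i k => [[|[|[|[|[|[|//]]]]]] ?] [[|[|[|[|//]]]] ?].
all: by rewrite /coefA /D_entry /=; ring.
Qed.

Lemma det_rowsub_Dmat (f : 'I_4 -> 'I_6) (r : nat -> nat) :
  (forall i, f i = r i :> nat) ->
  \det (rowsub f (Dmat (coefA q))) = det4 (fun i k => D_entry (r i) k).
Proof.
move=> fr; rewrite -det_mx44; congr (\det _); apply/matrixP => i k.
by rewrite [LHS]mxE [RHS]mxE Dmat_coefA fr.
Qed.

Lemma minors4_rows (r : seq nat) : all (fun k => k < 6)%N r ->
  minors4 (coefA q) [ffun i : 'I_4 => inord (nth 0 r i)] =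
  det4 (fun i k => D_entry (nth 0 r i) k).
Proof.
move=> r_lt6; apply: det_rowsub_Dmat => i; rewrite ffunE inordK //.
have [lt_i | le_i] := ltnP i (size r); first exact: (all_nthP 0 r_lt6).
by rewrite nth_default.
Qed.

Lemma in_QuL_comb (u v p : {mpoly K[4]}) :
  p = u * QuL_gens K true + v * QuL_gens K false -> in_ideal (@QuL_gens K) p.
Proof. by move->; apply: in_idealD; apply/in_idealMl/in_ideal_gen. Qed.

Lemma sorted_minor_in_QuL (r : nat -> nat) :
  (r 0 < r 1 < r 2)%N -> (r 2 < r 3 < 6)%N ->
  in_ideal (@QuL_gens K) (det4 (fun i k => D_entry (r i) k)).
Proof.
move=> /andP[lt01 lt12] /andP[lt23 lt3]; rewrite /det4 /=.
move: (r 0%N) (r 1%N) (r 2%N) (r 3%N) lt01 lt12 lt23 lt3.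
do 4!case=> [|[|[|[|[|[|?]]]]]] //; move=> _ _ _ _; rewrite /D_entry /=.
(* The fifteen row selections come in lexicographic order; seven minors vanish. *)
all: try by apply: (in_QuL_comb 0 0); rewrite /QuL_gens; ring.
all: [> apply: (in_QuL_comb (q%:MP * 'X_1) 0)
     | apply: (in_QuL_comb 0 (q%:MP * 'X_1))
     | apply: (in_QuL_comb (q%:MP * 'X_0) 0)
     | apply: (in_QuL_comb (q%:MP * 'X_2) 0)
     | apply: (in_QuL_comb (q%:MP * 'X_3) 0)
     | apply: (in_QuL_comb (- (q%:MP * 'X_2)) 0)
     | apply: (in_QuL_comb 0 (- (q%:MP * 'X_2)))
     | apply: (in_QuL_comb 0 (- (q%:MP * 'X_3))) ].
all: by rewrite /QuL_gens; ring.
Qed.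

End PointSchemeMatrix.

Lemma minors4_in_QuL (K : fieldType) (q : K) (f : {ffun 'I_4 -> 'I_6}) :
  in_ideal (@QuL_gens K) (minors4 (coefA q) f).
Proof.
rewrite /minors4; have [s le_fs ->] := det_rowsub_sort (Dmat (coefA q)) f.
apply: in_idealMl.
have [inj_fs | /det_rowsub_noninj ->] := boolP (injectiveb (f \o s)); last first.
  exact: in_ideal0.
have lt_fs := homo_ltn_inj _ (injectiveP _ inj_fs) le_fs.
rewrite (@det_rowsub_Dmat _ q _ (fun i => (f \o s) (inord i))) => [|i]; last first.
  by rewrite inord_val.
have lt_fs_at (a b : nat) :
    (a < b < 4)%N -> ((f \o s) (inord a) < (f \o s) (inord b))%N.
  by case/andP=> lt_ab lt_b; apply: lt_fs; rewrite !inordK // (ltn_trans lt_ab).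
by apply: sorted_minor_in_QuL; rewrite !lt_fs_at ?ltn_ord.
Qed.

Lemma mulX_QuL_in_minors4 {K : fieldType} {q : K} : q != 0 ->
  forall j b, in_ideal (minors4 (coefA q)) ('X_j * QuL_gens K b).
Proof.
move=> nz_q j b; have nzNq : - q != 0 by rewrite oppr_eq0.
have minor_rows (r : seq nat) (c : K) (p : {mpoly K[4]}) :
    c != 0 -> all (fun k => k < 6)%N r ->
    det4 (fun i k => D_entry q (nth 0 r i) k) = c%:MP * p ->
    in_ideal (minors4 (coefA q)) p.
  move=> nz_c r_lt6 minor_r.
  apply: (@in_ideal_genZ _ _ _ [ffun i : 'I_4 => inord (nth 0 r i)] _ _ nz_c).
  by rewrite minors4_rows.
move: j; apply: ord4P; case: b.
all: [> apply: (minor_rows [:: 0; 2; 3; 4]%N q) => //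
     | apply: (minor_rows [:: 0; 2; 4; 5]%N q) => //
     | apply: (minor_rows [:: 0; 1; 3; 4]%N q) => //
     | apply: (minor_rows [:: 0; 1; 4; 5]%N q) => //
     | apply: (minor_rows [:: 0; 2; 4; 5]%N q) => //
     | apply: (minor_rows [:: 1; 2; 4; 5]%N (- q)) => //
     | apply: (minor_rows [:: 0; 3; 4; 5]%N q) => //
     | apply: (minor_rows [:: 1; 3; 4; 5]%N (- q)) => // ].
all: by rewrite /det4 /D_entry /QuL_gens /=; ring.
Qed.

Lemma same_subscheme_minors4_QuL (K : fieldType) (q : K) : q != 0 ->
  same_subscheme (minors4 (coefA q)) (@QuL_gens K).
Proof.
move=> nz_q; apply: same_subscheme_sandwich; first exact: minors4_in_QuL.
exact: mulX_QuL_in_minors4.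
Qed.

Lemma gform_Dmat (K : fieldType) (m : nat) (c : 'I_m -> 'I_4 -> 'I_4 -> K)
    (i : 'I_m) (alpha beta : 'rV[K]_4) :
  gform c i alpha beta = (map_mx (meval (alpha 0)) (Dmat c) *m beta^T) i 0.
Proof.
rewrite /gform mxE exchange_big; apply: eq_bigr => k _.
rewrite !mxE raddf_sum mulr_suml; apply: eq_bigr => j _.
by rewrite /= mevalZ mevalXU.
Qed.

Lemma meval_minors4_eq0 {K : fieldType} {m : nat} {c : 'I_m -> 'I_4 -> 'I_4 -> K}
    {alpha beta : 'rV[K]_4} (f : {ffun 'I_4 -> 'I_m}) :
  beta != 0 -> (forall i, gform c i alpha beta = 0) -> (minors4 c f).@[alpha 0] = 0.
Proof.
move=> nz_beta g0; set M := map_mx (meval (alpha 0)) (Dmat c).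
have M_beta : M *m beta^T = 0.
  by apply/matrixP => i k; rewrite ord1 -gform_Dmat g0 mxE.
have -> : (minors4 c f).@[alpha 0] = \det (rowsub f M).
  by rewrite /M -map_mxsub det_map_mx.
rewrite -det_tr; apply/eqP/det0P; exists beta => //; apply: trmx_inj.
rewrite trmx_mul trmxK trmx0.
have -> : rowsub f M *m beta^T = rowsub f (M *m beta^T).
  by apply/matrixP => i k; rewrite !mxE; apply: eq_bigr => j _; rewrite !mxE.
by rewrite M_beta; apply/matrixP => i k; rewrite !mxE.
Qed.

Lemma gform_coefA_diag (K : fieldType) (q : K) (alpha : 'rV[K]_4) (i : 'I_6) :
  gform (coefA q) i alpha alpha =
  if val i == 4%N then - q * (alpha 0 0 ^+ 2 - alpha 0 1 * alpha 0 3) else 0.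
Proof.
by rewrite /gform !sum_ord4; case: i => [[|[|[|[|[|[|//]]]]]] ?]; rewrite /coefA /=; ring.
Qed.

Lemma gform_coefA_line (K : fieldType) (q : K) (alpha : 'rV[K]_4) (i : 'I_6) :
  alpha 0 0 = 0 -> alpha 0 2 = 0 ->
  gform (coefA q) i alpha (\row_k [:: 0; (1 + q) * alpha 0 1; 0; alpha 0 3]`_k) = 0.
Proof.
move=> a0 a2; rewrite /gform !sum_ord4 !mxE /= a0 a2.
by case: i => [[|[|[|[|[|[|//]]]]]] ?]; rewrite /coefA /=; ring.
Qed.

Lemma kernel_point_in_QuL (K : fieldType) (q : K) (alpha beta : 'rV[K]_4) :
  q != 0 -> alpha != 0 -> beta != 0 -> (forall i, gform (coefA q) i alpha beta = 0) ->
  alpha 0 0 ^+ 2 - alpha 0 1 * alpha 0 3 = 0 \/ (alpha 0 0 = 0 /\ alpha 0 2 = 0).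
Proof.
move=> nz_q /rV0Pn[j nz_aj] nz_beta g0.
set Fa := alpha 0 0 ^+ 2 - alpha 0 1 * alpha 0 3.
have F_mul b : Fa * alpha 0 (if b then 0 else 2) = 0.
  have := meval_in_ideal (alpha 0) (mulX_QuL_in_minors4 nz_q j b)
                         (fun f => meval_minors4_eq0 f nz_beta g0).
  rewrite mevalM mevalXU => /eqP; rewrite mulf_eq0 (negbTE nz_aj) => /eqP.
  by case: b; rewrite /QuL_gens !(mevalM, mevalB, mevalXU, rmorphXn); apply.
have [F0 | nz_F] := eqVneq Fa 0; [by left | right].
have Fa_mulI x : Fa * x = 0 -> x = 0.
  by move/eqP; rewrite mulf_eq0 (negbTE nz_F) => /eqP.
by split; apply: Fa_mulI; [exact: (F_mul true) | exact: (F_mul false)].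
Qed.

Lemma QuL_point_kernel (K : fieldType) (q : K) (alpha : 'rV[K]_4) :
  alpha != 0 ->
  alpha 0 0 ^+ 2 - alpha 0 1 * alpha 0 3 = 0 \/ (alpha 0 0 = 0 /\ alpha 0 2 = 0) ->
  exists2 beta : 'rV[K]_4, beta != 0 & forall i, gform (coefA q) i alpha beta = 0.
Proof.
move=> nz_alpha QL_alpha.
have [F0 | nz_F] := eqVneq (alpha 0 0 ^+ 2 - alpha 0 1 * alpha 0 3) 0.
  by exists alpha => // i; rewrite gform_coefA_diag F0 mulr0 if_same.
have [a0 a2] : alpha 0 0 = 0 /\ alpha 0 2 = 0.
  by case: QL_alpha => [/eqP|//]; rewrite (negbTE nz_F).
exists (\row_k [:: 0; (1 + q) * alpha 0 1; 0; alpha 0 3]`_k); last first.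
  by move=> i; apply: gform_coefA_line.
apply/rV0Pn; exists 3; rewrite mxE /=; apply: contraNneq nz_F => a3.
by rewrite a0 a3 expr2 !mul0r mulr0 subr0.
Qed.

Theorem proposition3 (K : closedFieldType) (q : K)
  (hchar : 2%N \notin [pchar K]) (hq0 : q != 0) (hq1 : q != -1) :
  (* scheme-theoretic: the point scheme V(4x4 minors of D) equals Q \cup L *)
  same_subscheme (minors4 (coefA q)) (@QuL_gens K)
  /\
  (* on points: alpha in P^3 is in the point scheme iff alpha in Q \cup L *)
  (forall alpha : 'rV[K]_4, alpha != 0 ->
     ((exists2 beta : 'rV[K]_4, beta != 0 &
         forall i : 'I_6, gform (coefA q) i alpha beta = 0)
      <-> (alpha 0 0 ^+ 2 - alpha 0 1 * alpha 0 3 = 0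
           \/ (alpha 0 0 = 0 /\ alpha 0 2 = 0)))).
Proof.
split; first exact: same_subscheme_minors4_QuL.
move=> alpha nz_alpha; split; last exact: QuL_point_kernel.
by case=> beta nz_beta g0; apply: kernel_point_in_QuL nz_beta g0.
Qed.
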